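(* There is a constant $C=C(n,m,\alpha)>0$ such that for all $x,y\in\mathbb{R}^n_+$, $x\neq y$, $$G_{2t}^+(x,y)\le\frac{C}{|x-y|^{n-2t}}.$$
   Context: $n\ge2$, $m\in\mathbb{N}$, $2m<n$, $0<\alpha<2$, $t=m+\alpha/2<n/2$. $\mathbb{R}^n_+=\{x: x_n>0\}$. $G_{2m}^+(x,y)=c_{n,m}(|x-y|^{2m-n}-|x^*-y|^{2m-n})$, $x^*=(x',-x_n)$; $G_\alpha^+(x,y)=\frac{A_{n,\alpha}}{s^{(n-\alpha)/2}}\Big[1-\frac{B_{n,\alpha}}{(s+\tau)^{(n-2)/2}}\int_0^{s/\tau}\frac{(s-\tau b)^{(n-2)/2}}{b^{\alpha/2}(1+b)}db\Big]$ with $s=|x-y|^2$, $\tau=4x_ny_n$ (Green's function of $(-\Delta)^{\alpha/2}$ on $\mathbb{R}^n_+$); $G_{2t}^+(x,y)=\int_{\mathbb{R}^n_+}G_{2m}^+(x,z)G_\alpha^+(z,y)dz$. *)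

From Stdlib Require Import Reals Lra Lia List ClassicalEpsilon.
Import ListNotations.
Open Scope R_scope.

(* Points of R^n are functions nat -> R; only coordinates 0..n-1 matter.
   The last coordinate x_n of the paper is index (n-1). *)
Definition pt := nat -> R.

Fixpoint sumR (k : nat) (f : nat -> R) : R :=
  match k with O => 0 | S k' => sumR k' f + f k' end.

Fixpoint prodR (k : nat) (f : nat -> R) : R :=
  match k with O => 1 | S k' => prodR k' f * f k' end.

Definition edist (n : nat) (x y : pt) : R :=
  sqrt (sumR n (fun i => (x i - y i) ^ 2)).

Definition refl (n : nat) (x : pt) : pt :=
  fun i => if Nat.eqb i (n - 1)%nat then - x i else x i.

Definition in_Hplus (n : nat) (x : pt) : Prop := 0 < x (n - 1)%nat.

Definition pt_neq (n : nat) (x y : pt) : Prop :=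
  ~ (forall i, (i < n)%nat -> x i = y i).

(* A box [a_0,b_0) x ... x [a_{n-1},b_{n-1}); a step function is a finite list of
   boxes with coefficients: s(z) = sum_j c_j 1_{box_j}(z). *)
Fixpoint boxind (k : nat) (a b z : pt) : R :=
  match k with
  | O => 1
  | S k' =>
      (if Rle_dec (a k') (z k') then (if Rlt_dec (z k') (b k') then 1 else 0) else 0)
      * boxind k' a b z
  end.

Definition vol (n : nat) (a b : pt) : R := prodR n (fun i => b i - a i).

Definition step := list (pt * pt * R).

Definition stepval (n : nat) (s : step) (z : pt) : R :=
  fold_right (fun '(a, b, c) acc => c * boxind n a b z + acc) 0 s.

Definition stepint (n : nat) (s : step) : R :=
  fold_right (fun '(a, b, c) acc => c * vol n a b + acc) 0 s.

Definition admissible (n : nat) (Dbox : pt -> pt -> Prop) (Dpt : pt -> Prop)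
  (f : pt -> R) (s : step) : Prop :=
  (forall a b c, In (a, b, c) s ->
       0 <= c /\ (forall i, (i < n)%nat -> a i <= b i) /\ Dbox a b) /\
  (forall z, Dpt z -> stepval n s z <= f z).

(* The set of integrals of admissible step functions; its supremum is the
   Lebesgue integral of f over the domain (for f >= 0 lower semicontinuous
   off finitely many points, as is the case here). *)
Definition lower_sums (n : nat) (Dbox : pt -> pt -> Prop) (Dpt : pt -> Prop)
  (f : pt -> R) : R -> Prop :=
  fun S => exists s, admissible n Dbox Dpt f s /\ S = stepint n s.

(* "int_D f <= B" : every lower sum is <= B (in particular the integral is finite). *)
Definition integral_le (n : nat) (Dbox : pt -> pt -> Prop) (Dpt : pt -> Prop)
  (f : pt -> R) (B : R) : Prop :=
  forall S, lower_sums n Dbox Dpt f S -> S <= B.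

Definition integral_val (n : nat) (Dbox : pt -> pt -> Prop) (Dpt : pt -> Prop)
  (f : pt -> R) : R :=
  epsilon (inhabits 0) (fun I => is_lub (lower_sums n Dbox Dpt f) I).

Definition Hbox (n : nat) : pt -> pt -> Prop := fun a _ => 0 <= a (n - 1)%nat.

Definition int_0_L (L : R) (g : R -> R) : R :=
  integral_val 1 (fun a b => 0 <= a 0%nat /\ b 0%nat <= L)
    (fun z => 0 < z 0%nat <= L) (fun z => g (z 0%nat)).

Definition G2m (n m : nat) (c : R) (x y : pt) : R :=
  c * (Rpower (edist n x y) (INR (2 * m) - INR n)
       - Rpower (edist n (refl n x) y) (INR (2 * m) - INR n)).

Definition Galpha (n : nat) (alpha A B : R) (x y : pt) : R :=
  let s := (edist n x y) ^ 2 in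
  let tau := 4 * x (n - 1)%nat * y (n - 1)%nat in
  A / Rpower s ((INR n - alpha) / 2) *
  (1 - B / Rpower (s + tau) ((INR n - 2) / 2) *
       int_0_L (s / tau)
         (fun b => Rpower (s - tau * b) ((INR n - 2) / 2)
                   / (Rpower b (alpha / 2) * (1 + b)))).

(* The integrand of G_{2t}^+(x,y) = int_{R^n_+} G_{2m}^+(x,z) G_alpha^+(z,y) dz *)
Definition G2t_integrand (n m : nat) (alpha c A B : R) (x y : pt) : pt -> R :=
  fun z => G2m n m c x z * Galpha n alpha A B z y.

(* Since the subtracted term of G_alpha^+ is a nonnegative integral and |x* - z| >= |x - z|
   on the half space, the integrand is at most cA |z - x|^(-a) |z - y|^(-b), with
   a = n - 2m < n, b = n - alpha < n and a + b - n = n - 2t > 0.  In the sup norm this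
   kernel has an explicit step majorant of integral O(d^(n-a-b)), d = |x - y| / 2: within d
   of a pole, cubes over the shells d 2^-j cost sum_j (d 2^-j)^(n-a) < oo since a < n, the
   other factor being at most d^(-b); beyond d, cubes over the shells d 2^j cost
   sum_j (d 2^j)^(n-a-b) < oo since a + b > n.  The majorant only has to beat a given
   admissible step function, which is bounded by its total mass (absorbed by one tiny cube
   at each pole) and has bounded support (so finitely many shells suffice).
   Comparing step functions off a hyperplane reduces, one coordinate at a time, to the
   monotonicity of the one-dimensional Riemann integral. *)

From Stdlib Require Import Reals Lra Lia List ClassicalEpsilon.
From Coquelicot Require Import Coquelicot.
Import ListNotations.
Open Scope R_scope.

Lemma Rpower_pos x y : 0 < Rpower x y.
Proof. apply exp_pos. Qed.

Lemma Rpower_Ropp_le u v e : 0 < u <= v -> 0 <= e -> Rpower v (- e) <= Rpower u (- e).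
Proof.
  intros huv he. rewrite !Rpower_Ropp.
  apply Rinv_le_contravar; [apply Rpower_pos | now apply Rle_Rpower_l].
Qed.

Lemma Rpower_Rinv w y : 0 < w -> Rpower (/ w) y = Rpower w (- y).
Proof. intros hw. unfold Rpower. rewrite ln_Rinv by lra. f_equal; ring. Qed.

Lemma Rpower_lt_1 x y : 1 < x -> y < 0 -> Rpower x y < 1.
Proof. intros hx hy. rewrite <- (Rpower_O x) by lra. now apply Rpower_lt. Qed.

Lemma Rpower_nonpos x y : x <= 0 -> Rpower x y = 1.
Proof.
  intros hx. assert (hl : ln x = 0) by (unfold ln; destruct (Rlt_dec 0 x); [exfalso; lra|reflexivity]).
  unfold Rpower. now rewrite hl, Rmult_0_r, exp_0.
Qed.

Lemma Rpower_Ropp_pow r e k : 0 < r -> Rpower r (- e) * r ^ k = Rpower r (INR k - e).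
Proof.
  intros hr. rewrite <- Rpower_pow, <- Rpower_plus by exact hr. f_equal; ring.
Qed.

Lemma Rpower_mult_pow d h y j : 0 < d -> 0 < h -> Rpower (d * h ^ j) y = Rpower d y * Rpower h y ^ j.
Proof.
  intros hd hh. induction j as [|j IH]; simpl.
  - now rewrite !Rmult_1_r.
  - replace (d * (h * h ^ j)) with (d * h ^ j * h) by ring.
    rewrite <- Rpower_mult_distr, IH by (try apply Rmult_lt_0_compat; try apply pow_lt; auto).
    ring.
Qed.

Lemma Rpower_Ropp_le_scaled u l v e : 0 < u -> 0 < l -> u <= l * v -> 0 <= e ->
  Rpower v (- e) <= Rpower l e / Rpower u e.
Proof.
  intros hu hl huv he.
  assert (hv : u / l <= v) by (apply (Rle_div_l _ _ _ hl); lra).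
  eapply Rle_trans.
  - apply (Rpower_Ropp_le (u / l)); [split; [apply Rdiv_lt_0_compat|exact hv]|exact he]; lra.
  - unfold Rdiv.
    rewrite <- Rpower_mult_distr, Rpower_Rinv, Rpower_Ropp by (try apply Rinv_0_lt_compat; lra).
    replace (- - e) with e by ring. right; ring.
Qed.

Lemma Rdiv_le_compat_r a b c : 0 < c -> a <= b -> a / c <= b / c.
Proof. intros hc hab. apply Rmult_le_compat_r; [left; now apply Rinv_0_lt_compat|exact hab]. Qed.

Lemma pow_le_self X k : 0 <= X <= 1 -> (1 <= k)%nat -> X ^ k <= X.
Proof.
  intros hX hk. destruct k as [|k]; [lia|]. simpl.
  assert (X ^ k <= 1) by (apply pow_incr with (n := k) in hX; now rewrite pow1 in hX).
  assert (0 <= X ^ k) by (apply pow_le; lra). nra.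
Qed.

Lemma pow2_unbounded X : exists N, X < 2 ^ N.
Proof.
  assert (hpow : forall N, INR N <= 2 ^ N).
  { induction N as [|N IH]; [simpl; lra|]. rewrite S_INR; simpl.
    assert (1 <= 2 ^ N) by (apply pow_R1_Rle; lra). lra. }
  destruct (INR_unbounded X) as [N hN]. exists N. specialize (hpow N). lra.
Qed.

Lemma INR_ge_2 n : (2 <= n)%nat -> 2 <= INR n.
Proof. intros hn. replace 2 with (INR 2) by (simpl; ring). now apply le_INR. Qed.

Lemma sumR_ext k f g : (forall i, f i = g i) -> sumR k f = sumR k g.
Proof. intros h; induction k; simpl; [reflexivity|]. now rewrite IHk, h. Qed.

Lemma sumR_le k f g : (forall i, (i < k)%nat -> f i <= g i) -> sumR k f <= sumR k g.
Proof.
  induction k; simpl; intros h; [lra|].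
  pose proof (h k ltac:(lia)). pose proof (IHk ltac:(intros; apply h; lia)). lra.
Qed.

Lemma sumR_nonneg k f : (forall i, (i < k)%nat -> 0 <= f i) -> 0 <= sumR k f.
Proof.
  intros h. apply Rle_trans with (sumR k (fun _ => 0)); [|now apply sumR_le].
  clear h. induction k; simpl; lra.
Qed.

Lemma sumR_term_le k f i : (forall j, (j < k)%nat -> 0 <= f j) -> (i < k)%nat -> f i <= sumR k f.
Proof.
  induction k; simpl; intros h hi; [lia|].
  destruct (Nat.eq_dec i k) as [->|hik].
  - pose proof (sumR_nonneg k f ltac:(intros; apply h; lia)). lra.
  - pose proof (IHk ltac:(intros; apply h; lia) ltac:(lia)). pose proof (h k ltac:(lia)). lra.
Qed.

Lemma sumR_scal k c f : sumR k (fun i => c * f i) = c * sumR k f.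
Proof. induction k; simpl; [ring|]. rewrite IHk; ring. Qed.

Lemma sumR_geom_le q k : 0 <= q < 1 -> sumR k (pow q) <= / (1 - q).
Proof.
  intros hq.
  assert (e : sumR k (pow q) * (1 - q) = 1 - q ^ k).
  { induction k; simpl; [ring|]. rewrite Rmult_plus_distr_r, IHk. ring. }
  assert (0 <= q ^ k) by (apply pow_le; lra).
  apply Rmult_le_reg_r with (1 - q); [lra|]. rewrite e, Rinv_l by lra. lra.
Qed.

Fixpoint supdist (k : nat) (x y : pt) : R :=
  match k with
  | O => 0
  | S k' => Rmax (supdist k' x y) (Rabs (x k' - y k'))
  end.

Lemma supdist_ge0 k x y : 0 <= supdist k x y.
Proof. induction k; simpl; [lra|]. eapply Rle_trans; [exact IHk|apply Rmax_l]. Qed.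

Lemma Rabs_le_supdist k x y i : (i < k)%nat -> Rabs (x i - y i) <= supdist k x y.
Proof.
  induction k; intros hi; [lia|]. simpl.
  destruct (Nat.eq_dec i k) as [->|hik]; [apply Rmax_r|].
  eapply Rle_trans; [apply IHk; lia|apply Rmax_l].
Qed.

Lemma supdist_le k x y B : 0 <= B -> (forall i, (i < k)%nat -> Rabs (x i - y i) <= B) ->
  supdist k x y <= B.
Proof. induction k; intros hB h; simpl; [exact hB|]. apply Rmax_lub; auto. Qed.

Lemma supdist_sym k x y : supdist k x y = supdist k y x.
Proof. induction k; simpl; [reflexivity|]. now rewrite IHk, Rabs_minus_sym. Qed.

Lemma supdist_triangle k x y z : supdist k x z <= supdist k x y + supdist k y z.
Proof.
  apply supdist_le; [pose proof (supdist_ge0 k x y); pose proof (supdist_ge0 k y z); lra|].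
  intros i hi. replace (x i - z i) with ((x i - y i) + (y i - z i)) by ring.
  eapply Rle_trans; [apply Rabs_triang|].
  apply Rplus_le_compat; now apply Rabs_le_supdist.
Qed.

Lemma supdist_le_edist k x y : supdist k x y <= edist k x y.
Proof.
  apply supdist_le; [apply sqrt_pos|]. intros i hi. unfold edist.
  rewrite <- (sqrt_pow2 (Rabs (x i - y i))) by apply Rabs_pos.
  apply sqrt_le_1_alt. rewrite pow2_abs.
  apply (sumR_term_le k (fun j => (x j - y j) ^ 2)); [intros; apply pow2_ge_0|exact hi].
Qed.

Lemma edist_le_supdist k x y : edist k x y <= sqrt (INR k) * supdist k x y.
Proof.
  unfold edist. rewrite <- (sqrt_pow2 (supdist k x y)) by apply supdist_ge0.
  rewrite <- sqrt_mult_alt by apply pos_INR. apply sqrt_le_1_alt.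
  apply Rle_trans with (sumR k (fun _ => supdist k x y ^ 2)).
  - apply sumR_le. intros i hi. rewrite <- (pow2_abs (x i - y i)).
    apply pow_incr. split; [apply Rabs_pos|now apply Rabs_le_supdist].
  - clear. generalize (supdist k x y ^ 2). intros r.
    induction k; simpl sumR; [simpl; lra|]. rewrite S_INR. lra.
Qed.

Definition interval_ind (a b t : R) : R :=
  if Rle_dec a t then (if Rlt_dec t b then 1 else 0) else 0.

Lemma interval_ind_01 a b t : 0 <= interval_ind a b t <= 1.
Proof. unfold interval_ind; destruct Rle_dec; [destruct Rlt_dec|]; lra. Qed.

Lemma boxind_01 k a b z : 0 <= boxind k a b z <= 1.
Proof.
  induction k; simpl; [lra|].
  pose proof (interval_ind_01 (a k) (b k) (z k)) as h. unfold interval_ind in h. nra.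
Qed.

Lemma boxind_in k a b z : (forall i, (i < k)%nat -> a i <= z i < b i) -> boxind k a b z = 1.
Proof.
  induction k; simpl; intros h; [reflexivity|].
  rewrite IHk by (intros; apply h; lia). destruct (h k ltac:(lia)).
  destruct Rle_dec; [destruct Rlt_dec|]; lra.
Qed.

Lemma boxind_out k a b z i : (i < k)%nat -> z i < a i \/ b i <= z i -> boxind k a b z = 0.
Proof.
  induction k; simpl; intros hi h; [lia|].
  destruct (Nat.eq_dec i k) as [->|hik].
  - destruct Rle_dec; [destruct Rlt_dec|]; lra.
  - rewrite IHk by (auto; lia). ring.
Qed.

Lemma boxind_neq0 k a b z : boxind k a b z <> 0 -> forall i, (i < k)%nat -> a i <= z i < b i.
Proof.
  induction k; simpl; intros h i hi; [lia|].
  destruct (Rle_dec (a k) (z k)); [destruct (Rlt_dec (z k) (b k))|]; try (exfalso; apply h; ring).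
  destruct (Nat.eq_dec i k) as [->|hik]; [lra|].
  apply IHk; [intros e; apply h; rewrite e; ring|lia].
Qed.

Lemma boxind_ext k a b z z' : (forall i, (i < k)%nat -> z i = z' i) ->
  boxind k a b z = boxind k a b z'.
Proof.
  induction k; simpl; intros h; [reflexivity|].
  rewrite IHk by (intros; apply h; lia). now rewrite (h k) by lia.
Qed.

Definition cube_lo (p : pt) (r : R) : pt := fun i => p i - r.
Definition cube_hi (p : pt) (r : R) : pt := fun i => p i + r.

Lemma boxind_cube k p r z : supdist k z p < r -> boxind k (cube_lo p r) (cube_hi p r) z = 1.
Proof.
  intros h. apply boxind_in. intros i hi.
  pose proof (proj1 (Rabs_le_between' _ _ _) (Rabs_le_supdist k z p i hi)).
  unfold cube_lo, cube_hi. lra.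
Qed.

Lemma vol_cube k p r : vol k (cube_lo p r) (cube_hi p r) = (2 * r) ^ k.
Proof. unfold vol, cube_lo, cube_hi. induction k; simpl; [ring|]. rewrite IHk. ring. Qed.

Definition ordered_boxes (k : nat) (u : step) : Prop :=
  forall a b c, In (a, b, c) u -> forall i, (i < k)%nat -> a i <= b i.

Definition nonneg_coefs (u : step) : Prop := forall a b c, In (a, b, c) u -> 0 <= c.

Definition scale_step (l : R) (u : step) : step :=
  map (fun p => let '(a, b, c) := p in (a, b, l * c)) u.

Lemma stepval_cons k a b c u z : stepval k ((a, b, c) :: u) z = c * boxind k a b z + stepval k u z.
Proof. reflexivity. Qed.

Lemma stepint_cons k a b c u : stepint k ((a, b, c) :: u) = c * vol k a b + stepint k u.
Proof. reflexivity. Qed.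

Lemma stepval_app k u v z : stepval k (u ++ v) z = stepval k u z + stepval k v z.
Proof. induction u as [|[[a b] c] u IH]; simpl; [ring|]. rewrite IH; ring. Qed.

Lemma stepint_app k u v : stepint k (u ++ v) = stepint k u + stepint k v.
Proof. induction u as [|[[a b] c] u IH]; simpl; [ring|]. rewrite IH; ring. Qed.

Lemma stepval_scale k l u z : stepval k (scale_step l u) z = l * stepval k u z.
Proof. induction u as [|[[a b] c] u IH]; simpl; [ring|]. rewrite IH; ring. Qed.

Lemma stepint_scale k l u : stepint k (scale_step l u) = l * stepint k u.
Proof. induction u as [|[[a b] c] u IH]; simpl; [ring|]. rewrite IH; ring. Qed.

Lemma ordered_boxes_app k u v : ordered_boxes k u -> ordered_boxes k v -> ordered_boxes k (u ++ v).
Proof. intros hu hv a b c hin. apply in_app_or in hin as [hin|hin]; eauto. Qed.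

Lemma ordered_boxes_scale k l u : ordered_boxes k u -> ordered_boxes k (scale_step l u).
Proof.
  intros hu a b c hin. apply in_map_iff in hin as [[[a' b'] c'] [he hin]].
  injection he as <- <- _. eauto.
Qed.

Lemma stepval_eq0 k u z : (forall a b c, In (a, b, c) u -> boxind k a b z = 0) -> stepval k u z = 0.
Proof.
  induction u as [|[[a b] c] u IH]; simpl; intros h; [reflexivity|].
  rewrite (h a b c (or_introl eq_refl)), IH by (intros; eapply h; right; eauto). ring.
Qed.

Fixpoint mass (u : step) : R :=
  match u with [] => 0 | (_, _, c) :: u' => c + mass u' end.

Lemma stepval_nonneg_le_mass k u z : nonneg_coefs u -> 0 <= stepval k u z <= mass u.
Proof.
  induction u as [|[[a b] c] u IH]; simpl; intros h; [lra|].
  assert (0 <= c) by (eapply h; left; reflexivity).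
  pose proof (boxind_01 k a b z).
  assert (0 <= stepval k u z <= mass u) by (apply IH; intros ? ? ? hin; eapply h; right; eauto).
  nra.
Qed.

Lemma mass_nonneg u : nonneg_coefs u -> 0 <= mass u.
Proof. intros h. pose proof (stepval_nonneg_le_mass 0 u (fun _ => 0) h). lra. Qed.

Fixpoint step_radius (k : nat) (u : step) (p : pt) : R :=
  match u with
  | [] => 0
  | (a, b, _) :: u' => supdist k a p + supdist k b p + step_radius k u' p
  end.

Lemma step_radius_ge0 k u p : 0 <= step_radius k u p.
Proof.
  induction u as [|[[a b] c] u IH]; simpl; [lra|].
  pose proof (supdist_ge0 k a p); pose proof (supdist_ge0 k b p); lra.
Qed.

Lemma step_radius_box k u p a b c : In (a, b, c) u ->
  supdist k a p + supdist k b p <= step_radius k u p.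
Proof.
  induction u as [|[[a' b'] c'] u IH]; intros hin; [destruct hin|]; simpl.
  pose proof (supdist_ge0 k a' p). pose proof (supdist_ge0 k b' p). pose proof (step_radius_ge0 k u p).
  destruct hin as [he|hin]; [injection he as -> -> _; lra|]. specialize (IH hin). lra.
Qed.

Lemma supdist_in_box k a b z p : (forall i, (i < k)%nat -> a i <= z i < b i) ->
  supdist k z p <= supdist k a p + supdist k b p.
Proof.
  intros hbox. apply supdist_le; [pose proof (supdist_ge0 k a p); pose proof (supdist_ge0 k b p); lra|].
  intros i hi. pose proof (hbox i hi).
  pose proof (proj1 (Rabs_le_between' _ _ _) (Rabs_le_supdist k a p i hi)).
  pose proof (proj1 (Rabs_le_between' _ _ _) (Rabs_le_supdist k b p i hi)).
  apply Rabs_le_between'. lra.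
Qed.

Lemma stepval_beyond_radius k u p z : step_radius k u p < supdist k z p -> stepval k u z = 0.
Proof.
  intros hz. apply stepval_eq0. intros a b c hin.
  destruct (Req_dec (boxind k a b z) 0) as [h0|hne]; [exact h0|exfalso].
  pose proof (supdist_in_box k a b z p (boxind_neq0 k a b z hne)).
  pose proof (step_radius_box k u p a b c hin). lra.
Qed.

Fixpoint step1_val (l : list (R * R * R)) (t : R) : R :=
  match l with [] => 0 | (al, be, w) :: l' => w * interval_ind al be t + step1_val l' t end.

Fixpoint step1_int (l : list (R * R * R)) : R :=
  match l with [] => 0 | (al, be, w) :: l' => w * (be - al) + step1_int l' end.

Fixpoint step1_span (l : list (R * R * R)) : R :=
  match l with [] => 0 | (al, be, _) :: l' => Rabs al + Rabs be + step1_span l' end.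

Definition ordered_intervals (l : list (R * R * R)) : Prop :=
  forall al be w, In (al, be, w) l -> al <= be.

Lemma step1_span_ge0 l : 0 <= step1_span l.
Proof.
  induction l as [|[[a b] w] l IH]; simpl; [lra|].
  pose proof (Rabs_pos a); pose proof (Rabs_pos b); lra.
Qed.

Lemma is_RInt_const_on (f : R -> R) v L H : L <= H -> (forall t, L < t < H -> f t = v) ->
  is_RInt f L H ((H - L) * v).
Proof.
  intros hLH h. apply is_RInt_ext with (fun _ => v); [|exact (is_RInt_const L H v)].
  intros t ht. rewrite Rmin_left, Rmax_right in ht by exact hLH. symmetry; now apply h.
Qed.

Lemma is_RInt_interval_ind a b L H : L <= a <= b -> b <= H ->
  is_RInt (interval_ind a b) L H (b - a).
Proof.
  intros hab hbH.
  assert (hleft : is_RInt (interval_ind a b) L a ((a - L) * 0)).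
  { apply is_RInt_const_on; [lra|]. intros t ht.
    unfold interval_ind. destruct Rle_dec; [lra|reflexivity]. }
  assert (hmid : is_RInt (interval_ind a b) a b ((b - a) * 1)).
  { apply is_RInt_const_on; [lra|]. intros t ht.
    unfold interval_ind. destruct Rle_dec; [destruct Rlt_dec|]; lra. }
  assert (hright : is_RInt (interval_ind a b) b H ((H - b) * 0)).
  { apply is_RInt_const_on; [lra|]. intros t ht.
    unfold interval_ind. destruct Rle_dec; [destruct Rlt_dec|]; lra. }
  replace (b - a) with ((a - L) * 0 + (b - a) * 1 + (H - b) * 0) by ring.
  exact (is_RInt_Chasles _ L b H _ _ (is_RInt_Chasles _ L a b _ _ hleft hmid) hright).
Qed.

Lemma is_RInt_step1 l L H : ordered_intervals l -> L <= - step1_span l -> step1_span l <= H ->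
  is_RInt (step1_val l) L H (step1_int l).
Proof.
  induction l as [|[[a b] w] l IH]; simpl; intros hl hL hH.
  - pose proof (is_RInt_const_on (step1_val []) 0 L H ltac:(lra) (fun _ _ => eq_refl)) as h.
    now rewrite Rmult_0_r in h.
  - pose proof (step1_span_ge0 l).
    pose proof (proj1 (Rabs_le_between a _) (Rle_refl _)).
    pose proof (proj1 (Rabs_le_between b _) (Rle_refl _)).
    assert (a <= b) by (eapply hl; left; reflexivity).
    assert (hind : is_RInt (interval_ind a b) L H (b - a)) by (apply is_RInt_interval_ind; lra).
    assert (hrest : is_RInt (step1_val l) L H (step1_int l))
      by (apply IH; [intros ? ? ? hin; eapply hl; right; exact hin|lra|lra]).
    exact (is_RInt_plus _ _ L H _ _ (is_RInt_scal _ L H w _ hind) hrest).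
Qed.

(* [step1_int l] is the Riemann integral of [step1_val l]; split it at [t0]. *)
Lemma step1_int_nonneg l t0 : ordered_intervals l ->
  (forall t, t <> t0 -> 0 <= step1_val l t) -> 0 <= step1_int l.
Proof.
  intros hl hpos.
  set (L := - (step1_span l + Rabs t0 + 1)). set (H := step1_span l + Rabs t0 + 1).
  pose proof (step1_span_ge0 l). pose proof (proj1 (Rabs_le_between t0 _) (Rle_refl _)).
  assert (hI : is_RInt (step1_val l) L H (step1_int l)) by (apply is_RInt_step1; unfold L, H; auto; lra).
  assert (hJ : is_RInt (step1_val l) L t0 (RInt (step1_val l) L t0)).
  { exact (RInt_correct _ _ _ (ex_RInt_Chasles_1 _ L t0 H ltac:(unfold L, H; lra) (ex_intro _ _ hI))). }
  pose proof (is_RInt_Chasles_2 _ L t0 H _ _ ltac:(unfold L, H; lra) hI hJ) as hK.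
  pose proof (is_RInt_ge_0 _ L t0 _ ltac:(unfold L; lra) hJ (fun t ht => hpos t ltac:(lra))).
  pose proof (is_RInt_ge_0 _ t0 H _ ltac:(unfold H; lra) hK (fun t ht => hpos t ltac:(lra))).
  change (minus (step1_int l) (RInt (step1_val l) L t0))
    with (step1_int l - RInt (step1_val l) L t0) in *.
  lra.
Qed.

Definition slice (k : nat) (u : step) (t : R) : step :=
  map (fun p => let '(a, b, c) := p in (a, b, c * interval_ind (a k) (b k) t)) u.

Definition project (k : nat) (u : step) : list (R * R * R) :=
  map (fun p => let '(a, b, c) := p in (a k, b k, c * vol k a b)) u.

Lemma stepval_S k u z : stepval (S k) u z = stepval k (slice k u (z k)) z.
Proof.
  induction u as [|[[a b] c] u IH]; simpl; [reflexivity|]. rewrite IH. unfold interval_ind. ring.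
Qed.

Lemma stepval_ext k u z z' : (forall i, (i < k)%nat -> z i = z' i) ->
  stepval k u z = stepval k u z'.
Proof.
  intros h. induction u as [|[[a b] c] u IH]; simpl; [reflexivity|].
  now rewrite IH, (boxind_ext k a b z z' h).
Qed.

Lemma stepint_slice k u t : stepint k (slice k u t) = step1_val (project k u) t.
Proof. induction u as [|[[a b] c] u IH]; simpl; [reflexivity|]. rewrite IH. ring. Qed.

Lemma stepint_S k u : stepint (S k) u = step1_int (project k u).
Proof. induction u as [|[[a b] c] u IH]; simpl; [reflexivity|]. rewrite IH. unfold vol; simpl. ring. Qed.

Lemma ordered_boxes_slice k u t : ordered_boxes (S k) u -> ordered_boxes k (slice k u t).
Proof.
  intros h a b c hin i hi. apply in_map_iff in hin as [[[a' b'] c'] [he hin]].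
  injection he as <- <- _. eapply h; eauto.
Qed.

Lemma ordered_intervals_project k u : ordered_boxes (S k) u -> ordered_intervals (project k u).
Proof.
  intros h al be w hin. apply in_map_iff in hin as [[[a' b'] c'] [he hin]].
  injection he as <- <- _. eapply h; eauto.
Qed.

Lemma stepval_slice_nonneg k u t : (forall z, z k = t -> 0 <= stepval (S k) u z) ->
  forall z, 0 <= stepval k (slice k u t) z.
Proof.
  intros h z. set (z' := fun i => if Nat.eqb i k then t else z i).
  assert (hz' : z' k = t) by (unfold z'; now rewrite Nat.eqb_refl).
  rewrite (stepval_ext k _ z z'), <- hz', <- stepval_S by
    (intros i hi; unfold z'; destruct (Nat.eqb_spec i k); [lia|reflexivity]).
  now apply h.
Qed.

Lemma stepint_nonneg k u : ordered_boxes k u -> (forall z, 0 <= stepval k u z) -> 0 <= stepint k u.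
Proof.
  revert u; induction k as [|k IH]; intros u hu hpos.
  - specialize (hpos (fun _ => 0)).
    replace (stepint 0 u) with (stepval 0 u (fun _ => 0)); [exact hpos|].
    clear. induction u as [|[[a b] c] u IH]; simpl; [reflexivity|]. rewrite IH. unfold vol; simpl. ring.
  - rewrite stepint_S. apply step1_int_nonneg with 0; [now apply ordered_intervals_project|].
    intros t _. rewrite <- stepint_slice.
    apply IH; [now apply ordered_boxes_slice|]. apply stepval_slice_nonneg. intros; apply hpos.
Qed.

Lemma stepint_nonneg_off_hyperplane k u t0 : ordered_boxes (S k) u ->
  (forall z, z k <> t0 -> 0 <= stepval (S k) u z) -> 0 <= stepint (S k) u.
Proof.
  intros hu hpos. rewrite stepint_S.
  apply step1_int_nonneg with t0; [now apply ordered_intervals_project|].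
  intros t ht. rewrite <- stepint_slice.
  apply stepint_nonneg; [now apply ordered_boxes_slice|].
  apply stepval_slice_nonneg. intros z hz. apply hpos. congruence.
Qed.

Lemma stepint_le_off_hyperplane k s t t0 : ordered_boxes (S k) s -> ordered_boxes (S k) t ->
  (forall z, z k <> t0 -> stepval (S k) s z <= stepval (S k) t z) ->
  stepint (S k) s <= stepint (S k) t.
Proof.
  intros hs ht hle.
  assert (h : 0 <= stepint (S k) (t ++ scale_step (-1) s)).
  { apply stepint_nonneg_off_hyperplane with t0.
    - apply ordered_boxes_app; [exact ht|]. now apply ordered_boxes_scale.
    - intros z hz. rewrite stepval_app, stepval_scale. specialize (hle z hz). lra. }
  rewrite stepint_app, stepint_scale in h. lra.
Qed.

Fixpoint cube_step (p : pt) (h w : nat -> R) (N : nat) : step :=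
  match N with
  | O => []
  | S N' => (cube_lo p (h N'), cube_hi p (h N'), w N') :: cube_step p h w N'
  end.

Lemma ordered_boxes_cube_step k p h w N : (forall j, 0 <= h j) -> ordered_boxes k (cube_step p h w N).
Proof.
  intros hh. induction N as [|N IH]; simpl; intros a b c hin i hi; [destruct hin|].
  destruct hin as [he|hin]; [|eapply IH; eauto].
  injection he as <- <- _. unfold cube_lo, cube_hi. pose proof (hh N). lra.
Qed.

Lemma nonneg_coefs_cube_step p h w N : (forall j, 0 <= w j) -> nonneg_coefs (cube_step p h w N).
Proof.
  intros hw. induction N as [|N IH]; simpl; intros a b c hin; [destruct hin|].
  destruct hin as [he|hin]; [injection he as _ _ <-; apply hw|eapply IH; eauto].
Qed.

Lemma stepval_cube_step_ge k p h w N z j : (forall j, 0 <= w j) -> (j < N)%nat ->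
  supdist k z p < h j -> w j <= stepval k (cube_step p h w N) z.
Proof.
  intros hw. induction N as [|N IH]; intros hj hz; [lia|]. simpl.
  pose proof (stepval_nonneg_le_mass k (cube_step p h w N) z (nonneg_coefs_cube_step p h w N hw)).
  pose proof (boxind_01 k (cube_lo p (h N)) (cube_hi p (h N)) z). pose proof (hw N).
  destruct (Nat.eq_dec j N) as [->|hjN].
  - rewrite boxind_cube by exact hz. lra.
  - pose proof (IH ltac:(lia) hz). nra.
Qed.

Lemma stepint_cube_step k p h w N :
  stepint k (cube_step p h w N) = sumR N (fun j => w j * (2 * h j) ^ k).
Proof. induction N; simpl; [reflexivity|]. rewrite IHN, vol_cube. ring. Qed.

Definition power_cubes (p : pt) (d g e : R) (N : nat) : step :=
  cube_step p (fun j => 4 * (d * g ^ j)) (fun j => Rpower (d * g ^ j) (- e)) N.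

Lemma ordered_boxes_power_cubes k p d g e N : 0 < d -> 0 < g ->
  ordered_boxes k (power_cubes p d g e N).
Proof.
  intros hd hg. apply ordered_boxes_cube_step. intros j.
  pose proof (pow_lt g j hg). nra.
Qed.

Lemma stepval_power_cubes_nonneg k p d g e N z : 0 <= stepval k (power_cubes p d g e N) z.
Proof.
  apply stepval_nonneg_le_mass, nonneg_coefs_cube_step. intros; left; apply Rpower_pos.
Qed.

Lemma stepval_power_cubes_ge k p d g e N z j : 0 < d -> 0 < g -> 0 <= e -> (j < N)%nat ->
  d * g ^ j <= supdist k z p < 4 * (d * g ^ j) ->
  Rpower (supdist k z p) (- e) <= stepval k (power_cubes p d g e N) z.
Proof.
  intros hd hg he hj hz. pose proof (pow_lt g j hg).
  eapply Rle_trans; [apply (Rpower_Ropp_le (d * g ^ j)); [split; [nra|apply hz]|exact he]|].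
  apply (stepval_cube_step_ge k p (fun j => 4 * (d * g ^ j)) (fun j => Rpower (d * g ^ j) (- e))).
  - intros; left; apply Rpower_pos.
  - exact hj.
  - apply hz.
Qed.

Lemma stepint_power_cubes_le k p d g e N : 0 < d -> 0 < g -> Rpower g (INR k - e) < 1 ->
  stepint k (power_cubes p d g e N) <= 8 ^ k * Rpower d (INR k - e) / (1 - Rpower g (INR k - e)).
Proof.
  intros hd hg hq. unfold power_cubes. rewrite stepint_cube_step.
  set (q := Rpower g (INR k - e)).
  assert (hterm : forall j, Rpower (d * g ^ j) (- e) * (2 * (4 * (d * g ^ j))) ^ k
                             = 8 ^ k * Rpower d (INR k - e) * q ^ j).
  { intros j. assert (0 < d * g ^ j) by (apply Rmult_lt_0_compat; [|apply pow_lt]; auto).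
    replace ((2 * (4 * (d * g ^ j))) ^ k) with (8 ^ k * (d * g ^ j) ^ k)
      by (rewrite <- Rpow_mult_distr; f_equal; ring).
    rewrite Rmult_comm, Rmult_assoc, (Rmult_comm _ (Rpower _ _)), Rpower_Ropp_pow by auto.
    rewrite Rpower_mult_pow by auto. unfold q. ring. }
  rewrite (sumR_ext N _ _ hterm), sumR_scal.
  assert (0 <= 8 ^ k * Rpower d (INR k - e))
    by (apply Rmult_le_pos; [apply pow_le; lra|left; apply Rpower_pos]).
  pose proof (sumR_geom_le q N ltac:(split; [left; apply Rpower_pos|exact hq])).
  unfold Rdiv. apply Rmult_le_compat_l; assumption.
Qed.

Lemma shell_of_decreasing (r : nat -> R) N rho : (forall j, r (S j) <= r j) -> (1 <= N)%nat ->
  r N <= rho <= r O -> exists j, (j < N)%nat /\ r (S j) <= rho <= r j.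
Proof.
  intros hr. induction N as [|N IH]; intros hN h; [lia|].
  destruct (Nat.eq_dec N 0) as [->|hN0]; [exists O; split; [lia|lra]|].
  destruct (Rle_lt_dec (r N) rho) as [hle|hlt].
  - destruct IH as [j [hj h']]; [lia|lra|]. exists j; split; [lia|exact h'].
  - exists N. split; [lia|lra].
Qed.

Lemma shell_of_increasing (r : nat -> R) N rho :
  r O < rho <= r N -> exists j, (j < N)%nat /\ r j < rho <= r (S j).
Proof.
  induction N as [|N IH]; intros h; [lra|].
  destruct (Rle_lt_dec rho (r N)) as [hle|hlt].
  - destruct IH as [j [hj h']]; [lra|]. exists j; split; [lia|exact h'].
  - exists N. split; [lia|lra].
Qed.

Definition near_const (k : nat) (e : R) : R :=
  8 ^ k * Rpower (/ 2) (INR k - e) / (1 - Rpower (/ 2) (INR k - e)) + 1.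

Definition far_const (k : nat) (e : R) : R := 8 ^ k / (1 - Rpower 2 (INR k - e)).

Lemma near_const_pos k e : e < INR k -> 0 < near_const k e.
Proof.
  intros he. unfold near_const.
  assert (Rpower (/ 2) (INR k - e) < 1) by (rewrite Rpower_Rinv by lra; apply Rpower_lt_1; lra).
  pose proof (Rpower_pos (/ 2) (INR k - e)). pose proof (pow_lt 8 k ltac:(lra)).
  assert (0 <= 8 ^ k * Rpower (/ 2) (INR k - e) / (1 - Rpower (/ 2) (INR k - e))).
  { unfold Rdiv. apply Rmult_le_pos; [nra|]. left; apply Rinv_0_lt_compat; lra. }
  lra.
Qed.

Lemma far_const_pos k e : INR k < e -> 0 < far_const k e.
Proof.
  intros he. unfold far_const.
  assert (Rpower 2 (INR k - e) < 1) by (apply Rpower_lt_1; lra).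
  apply Rdiv_lt_0_compat; [apply pow_lt|]; lra.
Qed.

Lemma stepval_power_cubes_halving k p d e N z : 0 < d -> 0 <= e -> (1 <= N)%nat ->
  d * (/ 2) ^ N <= supdist k z p <= d ->
  Rpower (supdist k z p) (- e) <= stepval k (power_cubes p (d / 2) (/ 2) e N) z.
Proof.
  intros hd he hN hz. set (r := fun j => d * (/ 2) ^ j).
  assert (hr : forall j, 0 < r j) by (intros j; apply Rmult_lt_0_compat; [lra|apply pow_lt; lra]).
  assert (hrS : forall j, r (S j) = r j / 2) by (intros j; unfold r; simpl; field).
  destruct (shell_of_decreasing r N (supdist k z p)) as [j [hj hshell]].
  { intros j. rewrite hrS. pose proof (hr j). lra. }
  { exact hN. }
  { unfold r. rewrite pow_O, Rmult_1_r. exact hz. }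
  apply stepval_power_cubes_ge with j; [lra|lra|exact he|exact hj|].
  replace (d / 2 * (/ 2) ^ j) with (r (S j)) by (unfold r; simpl; field).
  rewrite hrS in *. pose proof (hr j). lra.
Qed.

Lemma stepval_power_cubes_doubling k p d e N z : 0 < d -> 0 <= e ->
  d < supdist k z p <= d * 2 ^ N ->
  Rpower (supdist k z p) (- e) <= stepval k (power_cubes p d 2 e N) z.
Proof.
  intros hd he hz. set (r := fun j => d * 2 ^ j).
  destruct (shell_of_increasing r N (supdist k z p)) as [j [hj hshell]].
  { unfold r. rewrite pow_O, Rmult_1_r. exact hz. }
  apply stepval_power_cubes_ge with j; [lra|lra|exact he|exact hj|].
  unfold r in hshell; simpl in hshell. pose proof (pow_lt 2 j ltac:(lra)). split; nra.
Qed.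

Lemma small_dyadic_cube k d D M : (1 <= k)%nat -> 0 < d -> 0 < D -> 0 <= M ->
  exists N, (1 <= N)%nat /\ M * (2 * (d * (/ 2) ^ N)) ^ k <= D.
Proof.
  intros hk hd hD hM.
  set (m := Rmin 1 (D / (M + 1))).
  assert (hm : 0 < m) by (apply Rmin_pos; [lra|apply Rdiv_lt_0_compat; lra]).
  assert (hm1 : m <= 1) by apply Rmin_l. assert (hmD : m <= D / (M + 1)) by apply Rmin_r.
  destruct (pow2_unbounded (2 * d / m)) as [N hN]. exists (S N). split; [lia|].
  set (x := 2 * (d * (/ 2) ^ (S N))).
  assert (hx : 0 <= x <= m).
  { assert (0 < 2 ^ N) by (apply pow_lt; lra).
    assert (hx : x = d / 2 ^ N) by (unfold x; rewrite pow_inv; simpl; field; lra).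
    rewrite hx. split; [apply Rdiv_le_0_compat; lra|].
    apply Rmult_lt_compat_r with (r := m) in hN; [|exact hm].
    unfold Rdiv in *. rewrite Rmult_assoc, Rinv_l, Rmult_1_r in hN by lra.
    apply Rmult_le_reg_r with (2 ^ N); [lra|].
    rewrite Rmult_assoc, Rinv_l, Rmult_1_r by lra. nra. }
  assert (x ^ k <= D / (M + 1)) by (eapply Rle_trans; [apply pow_le_self; [lra|exact hk]|lra]).
  apply Rle_trans with (M * (D / (M + 1))); [apply Rmult_le_compat_l; lra|].
  apply Rmult_le_reg_r with (M + 1); [lra|]. unfold Rdiv.
  replace (M * (D * / (M + 1)) * (M + 1)) with (M * D) by (field; lra). nra.
Qed.

Lemma near_majorant k p d e M : (1 <= k)%nat -> 0 < d -> 0 <= e < INR k -> 0 <= M ->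
  exists t, ordered_boxes k t /\ (forall z, 0 <= stepval k t z) /\
    (forall z v, supdist k z p <= d -> v <= M ->
       (0 < supdist k z p -> v <= Rpower (supdist k z p) (- e)) -> v <= stepval k t z) /\
    stepint k t <= near_const k e * Rpower d (INR k - e).
Proof.
  intros hk hd he hM.
  set (D := Rpower d (INR k - e)).
  destruct (small_dyadic_cube k d D M hk hd ltac:(apply Rpower_pos) hM) as [N [hN hmass]].
  set (delta := d * (/ 2) ^ N).
  assert (hdelta : 0 < delta) by (apply Rmult_lt_0_compat; [lra|apply pow_lt; lra]).
  set (shells := power_cubes p (d / 2) (/ 2) e N).
  exists ((cube_lo p delta, cube_hi p delta, M) :: shells).
  pose proof (fun z => stepval_power_cubes_nonneg k p (d / 2) (/ 2) e N z) as hshells.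
  fold shells in hshells.
  pose proof (fun z => boxind_01 k (cube_lo p delta) (cube_hi p delta) z) as hcube.
  split; [|split; [|split]].
  - intros a b c [hcons|hin] i hi.
    + injection hcons as <- <- _. unfold cube_lo, cube_hi. lra.
    + exact (ordered_boxes_power_cubes k p (d / 2) (/ 2) e N ltac:(lra) ltac:(lra) a b c hin i hi).
  - intros z. rewrite stepval_cons. specialize (hcube z). specialize (hshells z). nra.
  - intros z v hzd hvM hv. rewrite stepval_cons.
    specialize (hcube z). specialize (hshells z).
    destruct (Rlt_le_dec (supdist k z p) delta) as [hnear|hfar].
    + rewrite boxind_cube by exact hnear. lra.
    + pose proof (stepval_power_cubes_halving k p d e N z hd ltac:(lra) hN (conj hfar hzd)) as hdom.
      fold shells in hdom. pose proof (hv ltac:(lra)). nra.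
  - rewrite stepint_cons, vol_cube.
    pose proof (stepint_power_cubes_le k p (d / 2) (/ 2) e N ltac:(lra) ltac:(lra)
      ltac:(rewrite Rpower_Rinv by lra; apply Rpower_lt_1; lra)) as hint.
    assert (hhalf : Rpower (d / 2) (INR k - e) = Rpower (/ 2) (INR k - e) * D)
      by (unfold Rdiv, D; rewrite Rpower_mult_distr by lra; f_equal; ring).
    rewrite hhalf in hint. fold shells in hint. fold delta in hmass.
    unfold near_const. unfold Rdiv in *.
    replace ((8 ^ k * Rpower (/ 2) (INR k - e) * / (1 - Rpower (/ 2) (INR k - e)) + 1) * D)
      with (8 ^ k * (Rpower (/ 2) (INR k - e) * D) * / (1 - Rpower (/ 2) (INR k - e)) + D) by ring.
    lra.
Qed.

Lemma far_majorant k p d e R0 : 0 < d -> INR k < e ->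
  exists t, ordered_boxes k t /\ (forall z, 0 <= stepval k t z) /\
    (forall z, d < supdist k z p <= R0 -> Rpower (supdist k z p) (- e) <= stepval k t z) /\
    stepint k t <= far_const k e * Rpower d (INR k - e).
Proof.
  intros hd he. pose proof (pos_INR k).
  destruct (pow2_unbounded (R0 / d)) as [N hN].
  assert (hR0 : R0 <= d * 2 ^ N).
  { apply Rmult_lt_compat_l with (r := d) in hN; [|exact hd].
    replace (d * (R0 / d)) with R0 in hN by (field; lra). lra. }
  exists (power_cubes p d 2 e N). split; [|split; [|split]].
  - apply ordered_boxes_power_cubes; lra.
  - intros z; apply stepval_power_cubes_nonneg.
  - intros z hz. apply stepval_power_cubes_doubling; lra.
  - unfold far_const, Rdiv. rewrite Rmult_assoc, (Rmult_comm (/ _)), <- Rmult_assoc.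
    apply stepint_power_cubes_le; [lra|lra|apply Rpower_lt_1; lra].
Qed.

Lemma near_pole_majorant k p q a b d M : (1 <= k)%nat -> 0 < d -> 0 <= a < INR k -> 0 <= b -> 0 <= M ->
  exists t, ordered_boxes k t /\ (forall z, 0 <= stepval k t z) /\
    (forall z v, supdist k z p <= d -> d <= supdist k z q -> v <= M ->
       (0 < supdist k z p -> v <= Rpower (supdist k z p) (- a) * Rpower (supdist k z q) (- b)) ->
       v <= stepval k t z) /\
    stepint k t <= near_const k a * Rpower d (INR k - (a + b)).
Proof.
  intros hk hd ha hb hM.
  set (l := Rpower d (- b)). assert (hl : 0 < l) by apply Rpower_pos.
  destruct (near_majorant k p d a (M / l) hk hd ha ltac:(apply Rdiv_le_0_compat; lra))
    as [t [ht [htpos [htdom htint]]]].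
  exists (scale_step l t). split; [|split; [|split]].
  - now apply ordered_boxes_scale.
  - intros z. rewrite stepval_scale. specialize (htpos z). nra.
  - intros z v hzp hzq hvM hv. rewrite stepval_scale, Rmult_comm. apply (Rle_div_l _ _ _ hl).
    apply htdom; [exact hzp|now apply Rdiv_le_compat_r|].
    intros hrp. apply (Rle_div_l _ _ _ hl). pose proof (hv hrp).
    pose proof (Rpower_Ropp_le d (supdist k z q) b ltac:(lra) hb).
    pose proof (Rpower_pos (supdist k z p) (- a)). unfold l. nra.
  - rewrite stepint_scale.
    replace (INR k - (a + b)) with (- b + (INR k - a)) by ring. rewrite Rpower_plus. fold l.
    pose proof (Rpower_pos d (INR k - a)). nra.
Qed.

Definition two_point_const (k : nat) (a b : R) : R :=
  near_const k a + near_const k b + Rpower 3 b * far_const k (a + b).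

Lemma two_point_const_pos k a b : 0 <= a < INR k -> 0 <= b < INR k -> INR k < a + b ->
  0 < two_point_const k a b.
Proof.
  intros ha hb hab. unfold two_point_const.
  pose proof (near_const_pos k a ltac:(lra)). pose proof (near_const_pos k b ltac:(lra)).
  pose proof (far_const_pos k (a + b) hab). pose proof (Rpower_pos 3 b). nra.
Qed.

(* Split at half the distance [2 d] between the poles: within [d] of one pole the other
   factor is at most [d^(-b)]; far from both, [|z - q| >= |z - p| / 3]. *)
Lemma two_point_majorant k p q a b M R0 : (1 <= k)%nat -> 0 <= a < INR k -> 0 <= b < INR k ->
  INR k < a + b -> 0 < supdist k p q -> 0 <= M ->
  exists t, ordered_boxes k t /\ (forall z, 0 <= stepval k t z) /\
    (forall z v, supdist k z p <= R0 -> v <= M ->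
       (0 < supdist k z p -> 0 < supdist k z q ->
        v <= Rpower (supdist k z p) (- a) * Rpower (supdist k z q) (- b)) ->
       v <= stepval k t z) /\
    stepint k t <= two_point_const k a b * Rpower (supdist k p q / 2) (INR k - (a + b)).
Proof.
  intros hk ha hb hab hpq hM.
  set (d := supdist k p q / 2). assert (hd : 0 < d) by (unfold d; lra).
  destruct (near_pole_majorant k p q a b d M hk hd ha ltac:(lra) hM) as [tA [hA [hApos [hAdom hAint]]]].
  destruct (near_pole_majorant k q p b a d M hk hd hb ltac:(lra) hM) as [tB [hB [hBpos [hBdom hBint]]]].
  destruct (far_majorant k p d (a + b) R0 hd hab) as [tC [hC [hCpos [hCdom hCint]]]].
  set (l := Rpower 3 b). assert (hl : 0 < l) by apply Rpower_pos.
  exists (tA ++ tB ++ scale_step l tC). split; [|split; [|split]].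
  - repeat apply ordered_boxes_app; auto. now apply ordered_boxes_scale.
  - intros z. rewrite !stepval_app, stepval_scale.
    specialize (hApos z). specialize (hBpos z). specialize (hCpos z). nra.
  - intros z v hzR hvM hv. rewrite !stepval_app, stepval_scale.
    specialize (hApos z). specialize (hBpos z). specialize (hCpos z).
    specialize (hAdom z v). specialize (hBdom z v). specialize (hCdom z).
    set (rp := supdist k z p) in *. set (rq := supdist k z q) in *.
    assert (hsum : 2 * d <= rp + rq).
    { unfold d, rp, rq. rewrite (supdist_sym k z p). pose proof (supdist_triangle k p z q). lra. }
    assert (hdiff : rp <= rq + 2 * d).
    { unfold d, rp, rq. rewrite (supdist_sym k p q). pose proof (supdist_triangle k z q p). lra. }
    destruct (Rle_lt_dec rp d) as [hpd|hpd].
    { pose proof (hAdom hpd ltac:(lra) hvM ltac:(intros; apply hv; lra)). nra. }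
    destruct (Rle_lt_dec rq d) as [hqd|hqd].
    { pose proof (hBdom hqd ltac:(lra) hvM ltac:(intros; rewrite Rmult_comm; apply hv; lra)). nra. }
    assert (hrq : Rpower rq (- b) <= l * Rpower rp (- b)).
    { pose proof (Rpower_Ropp_le (rp * / 3) rq b ltac:(split; lra) ltac:(lra)) as h.
      rewrite <- Rpower_mult_distr, Rpower_Rinv in h by lra.
      replace (- - b) with b in h by ring. unfold l. lra. }
    assert (hfar : Rpower rp (- (a + b)) <= stepval k tC z) by (apply hCdom; lra).
    rewrite Ropp_plus_distr, Rpower_plus in hfar.
    pose proof (hv ltac:(lra) ltac:(lra)). pose proof (Rpower_pos rp (- a)). nra.
  - rewrite !stepint_app, stepint_scale.
    pose proof (Rpower_pos d (INR k - (a + b))).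
    unfold two_point_const. fold d l. rewrite (Rplus_comm b a) in hBint. nra.
Qed.

Lemma admissible_step n Dbox Dpt f s : admissible n Dbox Dpt f s ->
  ordered_boxes n s /\ nonneg_coefs s /\ (forall a b c, In (a, b, c) s -> Dbox a b).
Proof.
  intros [hs _]. split; [|split]; intros a b c hin; destruct (hs a b c hin) as [hc [hab hD]]; auto.
Qed.

Lemma stepval_eq0_outside k u z i : (i < k)%nat ->
  (forall a b c, In (a, b, c) u -> z i < a i \/ b i <= z i) -> stepval k u z = 0.
Proof.
  intros hi h. apply stepval_eq0. intros a b c hin. exact (boxind_out k a b z i hi (h a b c hin)).
Qed.

Lemma supdist_1_origin z : supdist 1 z (fun _ => 0) = Rabs (z 0%nat).
Proof. simpl. rewrite Rminus_0_r. apply Rmax_right, Rabs_pos. Qed.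

Lemma lower_sums_1d_le L g e K : 0 < L -> 0 < K -> 0 <= e < 1 ->
  (forall b, 0 < b <= L -> g b <= K * Rpower b (- e)) ->
  forall S, lower_sums 1 (fun a b => 0 <= a 0%nat /\ b 0%nat <= L) (fun z => 0 < z 0%nat <= L)
              (fun z => g (z 0%nat)) S ->
    S <= K * (near_const 1 e * Rpower L (INR 1 - e)).
Proof.
  intros hL hK he hg S [s [hadm ->]].
  destruct (admissible_step _ _ _ _ _ hadm) as [hord [hcoef hbox]].
  destruct (near_majorant 1 (fun _ => 0) L e (mass s / K) ltac:(lia) hL ltac:(simpl; lra)
              ltac:(apply Rdiv_le_0_compat; [now apply mass_nonneg|lra]))
    as [t [ht [htpos [htdom htint]]]].
  apply Rle_trans with (stepint 1 (scale_step K t));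
    [|rewrite stepint_scale; apply Rmult_le_compat_l; lra].
  apply (stepint_le_off_hyperplane 0 s (scale_step K t) 0); [exact hord|now apply ordered_boxes_scale|].
  intros z hz0. rewrite stepval_scale. pose proof (htpos z).
  destruct (Rle_lt_dec (z 0%nat) 0) as [hneg|hpos];
    [|destruct (Rle_lt_dec (z 0%nat) L) as [hzL|hzL]].
  - rewrite (stepval_eq0_outside 1 s z 0)
      by (auto; intros a b c hin; left; pose proof (hbox a b c hin); lra).
    nra.
  - assert (hz : 0 < z 0%nat <= L) by lra.
    pose proof (proj2 hadm z hz) as hsz. pose proof (hg _ hz) as hgz.
    pose proof (stepval_nonneg_le_mass 1 s z hcoef).
    rewrite Rmult_comm. apply (Rle_div_l _ _ _ hK).
    apply htdom; rewrite ?supdist_1_origin, ?Rabs_right by lra; [lra|apply Rdiv_le_compat_r; lra|].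
    intros _. apply (Rle_div_l _ _ _ hK). simpl in hsz. nra.
  - rewrite (stepval_eq0_outside 1 s z 0)
      by (auto; intros a b c hin; right; pose proof (hbox a b c hin); lra).
    nra.
Qed.

Lemma int_0_L_nonneg L g e K : 0 < L -> 0 < K -> 0 <= e < 1 ->
  (forall b, 0 < b <= L -> 0 <= g b <= K * Rpower b (- e)) -> 0 <= int_0_L L g.
Proof.
  intros hL hK he hg.
  set (E := lower_sums 1 (fun a b => 0 <= a 0%nat /\ b 0%nat <= L) (fun z => 0 < z 0%nat <= L)
              (fun z => g (z 0%nat))).
  assert (hE0 : E 0).
  { exists []. split; [split; [intros a b c []|intros z hz; apply hg, hz]|reflexivity]. }
  assert (hlub : exists I, is_lub E I).
  { destruct (completeness E) as [I hI]; [|now exists 0|now exists I].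
    exists (K * (near_const 1 e * Rpower L (INR 1 - e))).
    intros S hS. apply (lower_sums_1d_le L g e K); auto. intros b hb; apply hg, hb. }
  destruct (epsilon_spec (inhabits 0) (fun I => is_lub E I) hlub) as [hub _].
  exact (hub 0 hE0).
Qed.

Lemma Galpha_le n alpha A B z y : 0 < A -> 0 < B -> 0 < alpha < 2 -> (2 <= n)%nat ->
  in_Hplus n z -> in_Hplus n y -> 0 < edist n z y ->
  Galpha n alpha A B z y <= A * Rpower (edist n z y) (- (INR n - alpha)).
Proof.
  unfold in_Hplus. intros hA hB ha hn hz hy hd. unfold Galpha. cbv zeta.
  set (s := edist n z y ^ 2). set (tau := 4 * z (n - 1)%nat * y (n - 1)%nat).
  set (p := (INR n - 2) / 2).
  assert (hs : 0 < s) by (apply pow_lt; exact hd).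
  assert (htau : 0 < tau) by (unfold tau; apply Rmult_lt_0_compat; lra).
  assert (hp : 0 <= p) by (unfold p; pose proof (INR_ge_2 n hn); lra).
  set (K := Rmax 1 (Rpower s p)). assert (hK : 1 <= K) by apply Rmax_l.
  set (g := fun b => Rpower (s - tau * b) p / (Rpower b (alpha / 2) * (1 + b))).
  assert (hI : 0 <= int_0_L (s / tau) g).
  { apply int_0_L_nonneg with (alpha / 2) K; [apply Rdiv_lt_0_compat; lra|lra|lra|].
    intros b hb. unfold g.
    assert (hnum : 0 < Rpower (s - tau * b) p <= K).
    { split; [apply Rpower_pos|].
      (* At [b = s / tau] the base vanishes and [Rpower] takes the junk value [1]. *)
      destruct (Rle_lt_dec (s - tau * b) 0) as [h0|h0]; [rewrite Rpower_nonpos; lra|].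
      eapply Rle_trans; [|apply Rmax_r]. apply Rle_Rpower_l; [exact hp|].
      assert (0 <= tau * b) by (apply Rmult_le_pos; lra). lra. }
    pose proof (Rpower_pos b (alpha / 2)) as hbpow.
    rewrite Rpower_Ropp. split.
    - apply Rdiv_le_0_compat; [lra|]. apply Rmult_lt_0_compat; lra.
    - unfold Rdiv. apply Rle_trans with (Rpower (s - tau * b) p * / Rpower b (alpha / 2)).
      + apply Rmult_le_compat_l; [lra|]. apply Rinv_le_contravar; [exact hbpow|]. nra.
      + apply Rmult_le_compat_r; [left; apply Rinv_0_lt_compat|]; lra. }
  assert (hcoef : 0 <= B / Rpower (s + tau) p) by (apply Rdiv_le_0_compat; [lra|apply Rpower_pos]).
  assert (hfac : 0 < A / Rpower s ((INR n - alpha) / 2))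
    by (apply Rdiv_lt_0_compat; [lra|apply Rpower_pos]).
  assert (0 <= B / Rpower (s + tau) p * int_0_L (s / tau) g) by (apply Rmult_le_pos; assumption).
  fold g. apply Rle_trans with (A / Rpower s ((INR n - alpha) / 2)); [nra|].
  unfold s. rewrite <- (Rpower_pow 2 (edist n z y)), Rpower_mult, Rpower_Ropp by exact hd.
  right. unfold Rdiv. do 3 f_equal. simpl. field.
Qed.

Lemma edist_le_edist_refl n x z : in_Hplus n x -> in_Hplus n z ->
  edist n x z <= edist n (refl n x) z.
Proof.
  unfold in_Hplus, edist, refl. intros hx hz. apply sqrt_le_1_alt, sumR_le. intros i hi.
  destruct (Nat.eqb_spec i (n - 1)) as [->|hin]; [nra|lra].
Qed.

Lemma G2m_bounds n m c x z : 0 < c -> (2 * m <= n)%nat -> in_Hplus n x -> in_Hplus n z ->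
  0 < edist n x z ->
  0 <= G2m n m c x z <= c * Rpower (edist n x z) (- (INR n - INR (2 * m))).
Proof.
  intros hc hm hx hz hd. unfold G2m.
  assert (he : 0 <= INR n - INR (2 * m)) by (pose proof (le_INR _ _ hm); lra).
  replace (INR (2 * m) - INR n) with (- (INR n - INR (2 * m))) by ring.
  pose proof (edist_le_edist_refl n x z hx hz).
  pose proof (Rpower_Ropp_le (edist n x z) (edist n (refl n x) z) _ ltac:(lra) he).
  pose proof (Rpower_pos (edist n (refl n x) z) (- (INR n - INR (2 * m)))).
  split; [apply Rmult_le_pos|]; nra.
Qed.

Lemma G2t_integrand_le n m alpha c A B x y z : 0 < c -> 0 < A -> 0 < B -> 0 < alpha < 2 ->
  (2 <= n)%nat -> (2 * m <= n)%nat -> in_Hplus n x -> in_Hplus n y -> in_Hplus n z ->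
  0 < supdist n z x -> 0 < supdist n z y ->
  G2t_integrand n m alpha c A B x y z <=
  c * A * (Rpower (supdist n z x) (- (INR n - INR (2 * m)))
           * Rpower (supdist n z y) (- (INR n - alpha))).
Proof.
  intros hc hA hB ha hn hm hx hy hz hzx hzy. unfold G2t_integrand.
  pose proof (supdist_le_edist n x z) as hxz. rewrite supdist_sym in hxz.
  pose proof (supdist_le_edist n z y) as hzy'.
  destruct (G2m_bounds n m c x z hc hm hx hz ltac:(lra)) as [hG0 hG].
  pose proof (Galpha_le n alpha A B z y hA hB ha hn hz hy ltac:(lra)) as hGa.
  pose proof (Rpower_Ropp_le _ _ (INR n - INR (2 * m)) (conj hzx hxz)
                ltac:(pose proof (le_INR _ _ hm); lra)).
  pose proof (Rpower_Ropp_le _ _ (INR n - alpha) (conj hzy hzy') ltac:(pose proof (INR_ge_2 n hn); lra)).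
  pose proof (Rpower_pos (edist n z y) (- (INR n - alpha))).
  pose proof (Rpower_pos (supdist n z x) (- (INR n - INR (2 * m)))).
  apply Rle_trans with (G2m n m c x z * (A * Rpower (edist n z y) (- (INR n - alpha)))); [nra|].
  apply Rle_trans with ((c * Rpower (supdist n z x) (- (INR n - INR (2 * m))))
                        * (A * Rpower (supdist n z y) (- (INR n - alpha)))); [|right; ring].
  apply Rmult_le_compat; nra.
Qed.

Lemma supdist_pos_of_pt_neq n x y : pt_neq n x y -> 0 < supdist n x y.
Proof.
  intros hxy. destruct (Rle_lt_dec (supdist n x y) 0) as [h|h]; [exfalso|exact h].
  apply hxy. intros i hi.
  pose proof (proj1 (Rabs_le_between' _ _ _) (Rabs_le_supdist n x y i hi)). lra.
Qed.

Lemma Rpower_half_supdist_le k x y e : (1 <= k)%nat -> 0 < supdist k x y -> 0 <= e ->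
  Rpower (supdist k x y / 2) (- e) <= Rpower (2 * sqrt (INR k)) e / Rpower (edist k x y) e.
Proof.
  intros hk hxy he. pose proof (lt_INR 0 k ltac:(lia)).
  apply Rpower_Ropp_le_scaled; [| |pose proof (edist_le_supdist k x y); lra|exact he].
  - pose proof (supdist_le_edist k x y). lra.
  - apply Rmult_lt_0_compat, sqrt_lt_R0; simpl in *; lra.
Qed.

Lemma G2t_lower_sum_le n m alpha c A B x y s t : 0 < c -> 0 < A -> 0 < B -> 0 < alpha < 2 ->
  (2 <= n)%nat -> (2 * m <= n)%nat -> in_Hplus n x -> in_Hplus n y ->
  admissible n (Hbox n) (in_Hplus n) (G2t_integrand n m alpha c A B x y) s ->
  ordered_boxes n t -> (forall z, 0 <= stepval n t z) ->
  (forall z v, supdist n z x <= step_radius n s x -> v <= mass s / (c * A) ->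
     (0 < supdist n z x -> 0 < supdist n z y ->
      v <= Rpower (supdist n z x) (- (INR n - INR (2 * m)))
           * Rpower (supdist n z y) (- (INR n - alpha))) ->
     v <= stepval n t z) ->
  stepint n s <= c * A * stepint n t.
Proof.
  intros hc hA hB ha hn hm hx hy hadm ht htpos htdom.
  destruct (admissible_step _ _ _ _ _ hadm) as [hord [hcoef hbox]].
  assert (hcA : 0 < c * A) by (apply Rmult_lt_0_compat; assumption).
  assert (hnS : S (n - 1) = n) by lia.
  rewrite <- stepint_scale, <- hnS.
  apply stepint_le_off_hyperplane with 0; rewrite hnS; [exact hord|now apply ordered_boxes_scale|].
  intros z hz0. rewrite stepval_scale. pose proof (htpos z).
  destruct (Rlt_le_dec (z (n - 1)%nat) 0) as [hneg|hpos].
  { rewrite (stepval_eq0_outside n s z (n - 1)) by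
      (try lia; intros a b c' hin; left; pose proof (hbox a b c' hin); unfold Hbox in *; lra). nra. }
  destruct (Rlt_le_dec (step_radius n s x) (supdist n z x)) as [hfar|hnear].
  { rewrite (stepval_beyond_radius n s x z hfar). nra. }
  assert (hz : in_Hplus n z) by (unfold in_Hplus; lra).
  pose proof (stepval_nonneg_le_mass n s z hcoef).
  rewrite Rmult_comm. apply (Rle_div_l _ _ _ hcA).
  apply htdom; [exact hnear|apply Rdiv_le_compat_r; lra|].
  intros hzx hzy. apply (Rle_div_l _ _ _ hcA).
  eapply Rle_trans; [exact (proj2 hadm z hz)|].
  rewrite Rmult_comm. apply G2t_integrand_le; auto.
Qed.

Theorem lemma2p1 (n m : nat) (alpha c A B : R)
  (hn : (2 <= n)%nat) (hm : (1 <= m)%nat) (h2m : (2 * m < n)%nat)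
  (ha0 : 0 < alpha) (ha2 : alpha < 2)
  (ht : INR m + alpha / 2 < INR n / 2)
  (hc : 0 < c) (hA : 0 < A) (hB : 0 < B) :
  exists C, 0 < C /\
    forall x y : pt, in_Hplus n x -> in_Hplus n y -> pt_neq n x y ->
      integral_le n (Hbox n) (in_Hplus n) (G2t_integrand n m alpha c A B x y)
        (C / Rpower (edist n x y) (INR n - 2 * (INR m + alpha / 2))).
Proof.
  set (a := INR n - INR (2 * m)). set (b := INR n - alpha).
  set (e := INR n - 2 * (INR m + alpha / 2)).
  assert (h2mR : INR (2 * m) = 2 * INR m) by (rewrite mult_INR; simpl; ring).
  assert (ha : 0 <= a < INR n).
  { pose proof (lt_INR _ _ h2m). pose proof (le_INR _ _ hm). unfold a. simpl in *. lra. }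
  assert (hb : 0 <= b < INR n) by (pose proof (INR_ge_2 n hn); unfold b; lra).
  assert (hab : INR n - (a + b) = - e) by (unfold a, b, e; rewrite h2mR; field).
  assert (hsum : INR n < a + b) by (unfold a, b; rewrite h2mR; lra).
  set (K := c * A * two_point_const n a b).
  assert (hK : 0 < K) by (apply Rmult_lt_0_compat; [nra|apply two_point_const_pos; lra]).
  exists (K * Rpower (2 * sqrt (INR n)) e).
  split; [apply Rmult_lt_0_compat; [exact hK|apply Rpower_pos]|].
  intros x y hx hy hxy S [s [hadm ->]].
  pose proof (mass_nonneg s (proj1 (proj2 (admissible_step _ _ _ _ _ hadm)))).
  destruct (two_point_majorant n x y a b (mass s / (c * A)) (step_radius n s x) ltac:(lia) ha hb
              ltac:(lra) (supdist_pos_of_pt_neq n x y hxy) ltac:(apply Rdiv_le_0_compat; nra))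
    as [t [hord [htpos [htdom htint]]]].
  eapply Rle_trans; [apply (G2t_lower_sum_le n m alpha c A B x y s t); auto; lia|].
  rewrite hab in htint.
  pose proof (Rpower_half_supdist_le n x y e ltac:(lia) (supdist_pos_of_pt_neq n x y hxy) ltac:(lra)).
  replace (K * Rpower (2 * sqrt (INR n)) e / Rpower (edist n x y) e)
    with (c * A * (two_point_const n a b * (Rpower (2 * sqrt (INR n)) e / Rpower (edist n x y) e)))
    by (unfold K, Rdiv; ring).
  apply Rmult_le_compat_l; [nra|]. eapply Rle_trans; [exact htint|].
  apply Rmult_le_compat_l; [left; apply two_point_const_pos; lra|assumption].
Qed.
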